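(* Let $\mathcal S$ be a finite fundamental system and $G$ the elementary group generated by the elements of $\mathcal S$. Then $G$ is solvable, and its derived length is at most the cardinality of $\mathcal S$.
   Context: A homeomorphism $f$ of $[0,1]$ is simple if $[0,1]\setminus\mathrm{Fix}(f)$ has exactly one connected component; its closure is the support $S_f$ of $f$. It is positive if $f(x)\ge x$ for all $x$. A fundamental domain of a simple $f$ is a segment $[x,f(x)]$ with $x$ in the interior of $S_f$. A fundamental system is a family $\mathcal S$ of triples $(f,S_f,I_f)$ such that each $f$ is a simple positive homeomorphism of $[0,1]$, $S_f$ is its support and $I_f\subset S_f$ is a fundamental domain of $f$, and for any two distinct triples in $\mathcal S$: either $S_f$ and $S_g$ have disjoint interiors, or $S_f\subset I_g$, or $S_g\subset I_f$. An elementary group is a group generated by the elements $f$ of a fundamental system. The derived length of a solvable group $G$ is the least $k$ with $G_k=\{1\}$, where $G_1=[G,G]$ and $G_{j+1}=[G_j,G_j]$. *)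

From Stdlib Require Import Reals List.
Open Scope R_scope.

(* Homeomorphisms of [0,1] are represented as maps R -> R that are the
   identity outside [0,1] (canonical extension). *)
Definition I01 (x : R) : Prop := 0 <= x <= 1.

Definition cont01 (f : R -> R) : Prop :=
  forall x, I01 x -> limit1_in f I01 (f x) x.

Definition homeo01 (f : R -> R) : Prop :=
  (forall x, ~ I01 x -> f x = x) /\ (forall x, I01 x -> I01 (f x)) /\ cont01 f /\
  exists g : R -> R,
    (forall x, ~ I01 x -> g x = x) /\ (forall x, I01 x -> I01 (g x)) /\ cont01 g /\
    (forall x, I01 x -> g (f x) = x /\ f (g x) = x).

Definition moved (f : R -> R) (x : R) : Prop := I01 x /\ f x <> x.

(* exactly one connected component: nonempty and connected (an interval) *)
Definition simple (f : R -> R) : Prop :=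
  (exists x, moved f x) /\
  (forall a b c, moved f a -> moved f b -> a <= c <= b -> moved f c).

Definition closure (A : R -> Prop) (x : R) : Prop :=
  forall eps, 0 < eps -> exists y, A y /\ Rabs (y - x) < eps.

Definition interior (A : R -> Prop) (x : R) : Prop :=
  exists eps, 0 < eps /\ forall y, Rabs (y - x) < eps -> A y.

Definition support (f : R -> R) : R -> Prop := closure (moved f).

Definition positive (f : R -> R) : Prop := forall x, x <= f x.

Definition segment (a b : R) (y : R) : Prop := a <= y <= b.

Definition fundamental_domain (f : R -> R) (I : R -> Prop) : Prop :=
  exists x, interior (support f) x /\ forall y, I y <-> segment x (f x) y.

(* A finite fundamental system: a duplicate-free list of pairs (f, I_f);
   the support S_f is determined by f (S_f = support f). *)
Definition fundamental_system (S : list ((R -> R) * (R -> Prop))) : Prop :=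
  NoDup S /\
  (forall p, In p S ->
     homeo01 (fst p) /\ simple (fst p) /\ positive (fst p) /\
     fundamental_domain (fst p) (snd p)) /\
  (forall p q, In p S -> In q S -> p <> q ->
     (forall x, ~ (interior (support (fst p)) x /\ interior (support (fst q)) x))
     \/ (forall x, support (fst p) x -> snd q x)
     \/ (forall x, support (fst q) x -> snd p x)).

Inductive gen (A : (R -> R) -> Prop) : (R -> R) -> Prop :=
| gen_id : gen A (fun x => x)
| gen_base : forall f, A f -> gen A f
| gen_comp : forall f g, gen A f -> gen A g -> gen A (fun x => f (g x))
| gen_inv : forall f g, gen A f -> (forall x, f (g x) = x /\ g (f x) = x) -> gen A g.

Definition inverse_of (f g : R -> R) : Prop := forall x, f (g x) = x /\ g (f x) = x.

Definition comm_set (H : (R -> R) -> Prop) (h : R -> R) : Prop :=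
  exists f g fi gi, H f /\ H g /\ inverse_of f fi /\ inverse_of g gi /\
    h = (fun x => fi (gi (f (g x)))).

Fixpoint derived (G : (R -> R) -> Prop) (k : nat) : (R -> R) -> Prop :=
  match k with
  | O => G
  | S k' => gen (comm_set (derived G k'))
  end.

Definition elementary_group (S : list ((R -> R) * (R -> Prop))) : (R -> R) -> Prop :=
  gen (fun f => exists I, In (f, I) S).

Definition trivial_group (H : (R -> R) -> Prop) : Prop :=
  forall h, H h -> h = (fun x => x).

Definition solvable (G : (R -> R) -> Prop) : Prop :=
  exists k, trivial_group (derived G k).

Definition derived_length_le (G : (R -> R) -> Prop) (n : nat) : Prop :=
  trivial_group (derived G n).

(* Call an element of the system maximal when its support lies in no other
   fundamental domain; maximal elements have pairwise disjoint supports, so they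
   commute. Let N be generated by the conjugates r^k q r^-k of the non-maximal
   elements q by the powers of the maximal r with S_q inside I_r. Since the
   translates r^k I_r are pairwise disjoint, these conjugates form again a
   fundamental system, of nesting depth one less. Maximal elements normalize N
   and the others lie in N, so N is normal in G and G/N is abelian: [G,G] <= N,
   and induction on the depth gives G_n = 1 for n the depth, at most |S|. *)

From Pilot Require Import Defs.
From Stdlib Require Import Reals List Lra Lia ZArith.
From Stdlib Require Import Classical ClassicalEpsilon FunctionalExtensionality.
Open Scope R_scope.

Definition moves (f : R -> R) (x : R) : Prop := f x <> x.

Lemma inverse_of_sym f g : inverse_of f g -> inverse_of g f.
Proof. intros H x; destruct (H x); auto. Qed.

Lemma inverse_of_injective f g a b : inverse_of f g -> f a = f b -> a = b.
Proof. intros H E. destruct (H a) as [_ <-], (H b) as [_ <-]. congruence. Qed.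

Lemma inverse_of_unique f g h : inverse_of f g -> inverse_of f h -> g = h.
Proof.
  intros Hg Hh. apply functional_extensionality; intro x.
  destruct (Hh x) as [E _]. destruct (Hg (h x)) as [_ <-]. congruence.
Qed.

Lemma inverse_of_comp f fi g gi :
  inverse_of f fi -> inverse_of g gi -> inverse_of (fun x => f (g x)) (fun x => gi (fi x)).
Proof. intros Hf Hg x. destruct (Hf x), (Hg x), (Hf (g x)), (Hg (fi x)). split; congruence. Qed.

Lemma moves_image f fi x : inverse_of f fi -> moves f x -> moves f (f x).
Proof. intros Hi Hm E. apply Hm. apply (inverse_of_injective f fi); auto. Qed.

Lemma moves_preimage f fi x : inverse_of f fi -> moves f x -> moves f (fi x).
Proof. intros Hi Hm E. apply Hm. destruct (Hi x) as [Hx _]. rewrite E in Hx. congruence. Qed.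

Lemma strict_increasing_le f x y : strict_increasing f -> x <= y -> f x <= f y.
Proof. intros H [Hl|<-]; [left; auto|lra]. Qed.

Lemma strict_increasing_le_iff f x y : strict_increasing f -> (f x <= f y <-> x <= y).
Proof.
  intros H; split; intros Hl; [|apply strict_increasing_le; auto].
  destruct (Rle_or_lt x y) as [|Hlt]; auto. apply H in Hlt. lra.
Qed.

Lemma strict_increasing_inverse f fi : strict_increasing f -> inverse_of f fi -> strict_increasing fi.
Proof.
  intros H Hi x y Hxy. destruct (Rlt_or_le (fi x) (fi y)) as [|Hle]; auto.
  apply (strict_increasing_le f) in Hle; auto. destruct (Hi x), (Hi y). lra.
Qed.

Definition clamp (x : R) : R := Rmax 0 (Rmin 1 x).

Lemma clamp_I01 x : I01 (clamp x).
Proof. unfold clamp, I01, Rmax, Rmin; repeat destruct Rle_dec; lra. Qed.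

Lemma clamp_id x : I01 x -> clamp x = x.
Proof. unfold clamp, I01, Rmax, Rmin; intros; repeat destruct Rle_dec; lra. Qed.

Lemma clamp_lipschitz x y : Rabs (clamp y - clamp x) <= Rabs (y - x).
Proof.
  unfold clamp, Rmax, Rmin; repeat destruct Rle_dec;
  unfold Rabs; repeat destruct Rcase_abs; lra.
Qed.

Lemma cont01_continuity_clamp f : cont01 f -> continuity (fun x => f (clamp x)).
Proof.
  intros Hc x eps Heps.
  destruct (Hc (clamp x) (clamp_I01 x) eps Heps) as [alp [Halp H]].
  exists alp; split; auto.
  intros y [_ Hy]. apply H. split; [apply clamp_I01|].
  simpl in *; unfold R_dist in *. pose proof (clamp_lipschitz x y). lra.
Qed.

Lemma homeo01_inverse f : homeo01 f -> exists g, inverse_of f g.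
Proof.
  intros [Hout [_ [_ [g [Hgout [_ [_ Hinv]]]]]]]. exists g. intro x.
  destruct (classic (I01 x)) as [H|H]; [destruct (Hinv x H); auto|].
  rewrite (Hgout x H), (Hout x H), (Hgout x H). auto.
Qed.

Lemma homeo01_moved f x : homeo01 f -> (moved f x <-> moves f x).
Proof.
  intros [Hout _]. unfold moved, moves; split; [tauto|].
  intros H; split; auto. apply NNPP; intro HH. apply H, Hout, HH.
Qed.

(* A positive homeomorphism fixes 1; if it reversed a < b, the intermediate
   value theorem on [b, 1] would give a second preimage of f a. *)
Lemma homeo01_strict_increasing f : homeo01 f -> Defs.positive f -> strict_increasing f.
Proof.
  intros Hh Hpos. destruct (homeo01_inverse f Hh) as [g Hg].
  destruct Hh as [Hout [Hin [Hc _]]].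
  assert (H1 : f 1 = 1).
  { assert (I01 1) by (unfold I01; lra). pose proof (Hin 1 H). pose proof (Hpos 1). unfold I01 in *. lra. }
  assert (Hloc : forall a b, I01 a -> I01 b -> a < b -> f a < f b).
  { intros a b Ha Hb Hab.
    destruct (Rlt_or_le (f a) (f b)) as [|Hle]; auto. exfalso.
    assert (Hne : f a <> f b) by (intro E; apply (inverse_of_injective f g) in E; auto; lra).
    pose proof (Hin a Ha); pose proof (Hin b Hb). unfold I01 in *.
    assert (Hfa1 : f a < 1).
    { destruct (Req_dec (f a) 1) as [E|]; [|lra].
      rewrite <- H1 in E. apply (inverse_of_injective f g) in E; auto. lra. }
    assert (Hb1 : b < 1) by (destruct (Req_dec b 1); [subst; lra|lra]).
    destruct (IVT (fun x => f (clamp x) - f a) b 1) as [z [Hz Ez]].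
    - apply continuity_minus; [apply cont01_continuity_clamp; auto|apply continuity_const; intros u v; auto].
    - lra.
    - rewrite clamp_id by (unfold I01; lra). lra.
    - rewrite clamp_id by (unfold I01; lra). lra.
    - rewrite clamp_id in Ez by (unfold I01; lra).
      assert (z = a) by (apply (inverse_of_injective f g); auto; lra). lra. }
  intros a b Hab.
  destruct (classic (I01 a)) as [Ha|Ha]; destruct (classic (I01 b)) as [Hb|Hb]; auto.
  - rewrite (Hout b Hb). pose proof (Hin a Ha). unfold I01 in *. lra.
  - rewrite (Hout a Ha). pose proof (Hin b Hb). unfold I01 in *. lra.
  - rewrite (Hout a Ha), (Hout b Hb). auto.
Qed.

(** * Elementary pairs *)

Definition pair := ((R -> R) * (R -> Prop))%type.

Definition interval_moves (f : R -> R) : Prop :=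
  forall a b c, moves f a -> moves f b -> a <= c <= b -> moves f c.

(* A pair [(f, I_f)] of a fundamental system, with [S_f] replaced by the set [moves f]. *)
Record elementary (p : pair) : Prop := {
  elementary_increasing : strict_increasing (fst p);
  elementary_invertible : exists fi, inverse_of (fst p) fi;
  elementary_positive : forall x, x <= fst p x;
  elementary_interval : interval_moves (fst p);
  elementary_domain : exists x0, moves (fst p) x0 /\ forall y, snd p y <-> x0 <= y <= fst p x0 }.

Definition disjoint_moves (f g : R -> R) : Prop := forall x, ~ (moves f x /\ moves g x).

Definition nested (p q : pair) : Prop := forall x, moves (fst p) x -> snd q x.

Lemma elementary_moves_around p y : elementary p -> moves (fst p) y ->
  exists fi, inverse_of (fst p) fi /\ fi y < y < fst p y /\
             moves (fst p) (fi y) /\ moves (fst p) (fst p y).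
Proof.
  intros [_ [fi Hi] Hpos _ _] Hm. exists fi.
  pose proof (moves_preimage _ _ _ Hi Hm). pose proof (moves_image _ _ _ Hi Hm).
  destruct (Hi y) as [Hy _]. split; [auto|split; [split|auto]].
  - destruct (Hpos (fi y)) as [|E]; rewrite Hy in *; [auto|congruence].
  - destruct (Hpos y) as [|E]; [auto|congruence].
Qed.

Lemma elementary_domain_moves p y : elementary p -> snd p y -> moves (fst p) y.
Proof.
  intros [_ [fi Hi] _ Hcv [x0 [Hx0 HI]]] Hy. apply HI in Hy.
  apply (Hcv x0 (fst p x0)); auto. apply (moves_image _ fi); auto.
Qed.

Lemma nested_irrefl p : elementary p -> ~ nested p p.
Proof.
  intros Hp Hn. pose proof Hp as [_ _ _ _ [x0 [Hx0 HI]]].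
  destruct (elementary_moves_around p x0 Hp Hx0) as [fi [_ [? [Hm _]]]].
  apply Hn, HI in Hm. lra.
Qed.

Lemma nested_trans p q r : elementary q -> nested p q -> nested q r -> nested p r.
Proof. intros Hq H1 H2 x Hx. apply H2, elementary_domain_moves, H1; auto. Qed.

Lemma nested_moves_inside q p x0 y : elementary q ->
  (forall y, snd p y <-> x0 <= y <= fst p x0) ->
  nested q p -> moves (fst q) y -> x0 < y < fst p x0.
Proof.
  intros Hq HI Hn Hy.
  destruct (elementary_moves_around q y Hq Hy) as [fi [_ [? [Hl Hr]]]].
  apply Hn, HI in Hy; apply Hn, HI in Hl; apply Hn, HI in Hr. lra.
Qed.

Lemma disjoint_not_nested p q : elementary p -> elementary q ->
  disjoint_moves (fst p) (fst q) -> ~ nested p q.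
Proof.
  intros Hp Hq Hd Hn. pose proof Hp as [_ _ _ _ [x0 [Hx0 _]]].
  apply (Hd x0); split; auto. apply elementary_domain_moves, Hn; auto.
Qed.

Lemma elementary_of_fundamental f I : homeo01 f -> simple f -> Defs.positive f ->
  fundamental_domain f I -> elementary (f, I).
Proof.
  intros Hh [_ Hs] Hp [x0 [[eps [Heps Hsupp]] HI]].
  assert (Hcv : interval_moves f).
  { intros a b c Ha Hb Hc. apply (homeo01_moved f c Hh).
    apply (Hs a b c); auto; apply (homeo01_moved f _ Hh); auto. }
  split; simpl; auto using homeo01_strict_increasing, homeo01_inverse.
  exists x0; split; auto.
  assert (Hl : support f (x0 - eps/2)) by (apply Hsupp; rewrite Rabs_left; lra).
  assert (Hr : support f (x0 + eps/2)) by (apply Hsupp; rewrite Rabs_right; lra).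
  destruct (Hl (eps/2)) as [y1 [Hy1 Ey1]]; [lra|].
  destruct (Hr (eps/2)) as [y2 [Hy2 Ey2]]; [lra|].
  apply Rabs_def2 in Ey1; apply Rabs_def2 in Ey2.
  apply (Hcv y1 y2); [apply (homeo01_moved f y1 Hh) in Hy1|apply (homeo01_moved f y2 Hh) in Hy2|]; auto; lra.
Qed.

Lemma moves_support f x : homeo01 f -> moves f x -> support f x.
Proof.
  intros Hh Hx eps Heps. exists x. rewrite Rminus_diag, Rabs_R0.
  split; auto. apply (homeo01_moved f x Hh); auto.
Qed.

Lemma moves_interior_support p x : homeo01 (fst p) -> elementary p ->
  moves (fst p) x -> Defs.interior (support (fst p)) x.
Proof.
  intros Hh Hp Hx.
  destruct (elementary_moves_around p x Hp Hx) as [fi [_ [[Hl Hr] [Hml Hmr]]]].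
  exists (Rmin (x - fi x) (fst p x - x)). split; [apply Rmin_glb_lt; lra|].
  intros y Hy. apply moves_support; auto.
  pose proof (Rmin_l (x - fi x) (fst p x - x)); pose proof (Rmin_r (x - fi x) (fst p x - x)).
  apply Rabs_def2 in Hy. apply (elementary_interval p Hp (fi x) (fst p x)); auto. lra.
Qed.

(** * Generated groups and integer powers *)

Lemma gen_ext A f g : gen A f -> (forall x, f x = g x) -> gen A g.
Proof. intros H E. replace g with f; auto. apply functional_extensionality; auto. Qed.

Lemma gen_incl (A B : (R -> R) -> Prop) f : (forall h, A h -> gen B h) -> gen A f -> gen B f.
Proof. intros H Hg. induction Hg; [constructor|auto|apply gen_comp; auto|eapply gen_inv; eauto]. Qed.

Lemma gen_invertible A f : (forall h, A h -> exists hi, inverse_of h hi) -> gen A f ->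
  exists fi, inverse_of f fi.
Proof.
  intros H Hg. induction Hg as [| |f g _ [fi Hf] _ [gi Hg]|f g _ _ Hfg].
  - exists (fun x => x). intro; auto.
  - auto.
  - exists (fun x => gi (fi x)). apply inverse_of_comp; auto.
  - exists f. exact (inverse_of_sym _ _ Hfg).
Qed.

Lemma gen_trivial (A : (R -> R) -> Prop) h : (forall f, ~ A f) -> gen A h -> h = (fun x => x).
Proof.
  intros HA Hg. induction Hg as [|f Hf| |f g _ -> Hfg].
  - reflexivity.
  - exfalso; eapply HA; eauto.
  - subst; reflexivity.
  - apply functional_extensionality. intro x. apply Hfg.
Qed.

Lemma derived_mono (H K : (R -> R) -> Prop) k :
  (forall f, H f -> K f) -> forall f, derived H k f -> derived K k f.
Proof.
  intros Hs. induction k as [|k IH]; simpl; auto.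
  intros f. apply gen_incl.
  intros h [a [b [ai [bi [Ha [Hb [Hai [Hbi E]]]]]]]]. apply gen_base.
  exists a, b, ai, bi. auto 10.
Qed.

Lemma derived_succ G k : derived G (S k) = derived (derived G 1) k.
Proof. induction k as [|k IH]; [reflexivity|]. simpl in *. rewrite IH. reflexivity. Qed.

Definition zpow (r ri : R -> R) (k : Z) : R -> R :=
  if Z.leb 0 k then Nat.iter (Z.to_nat k) r else Nat.iter (Z.to_nat (- k)) ri.

Section IntegerPowers.
Variables r ri : R -> R.
Hypothesis Hri : inverse_of r ri.

Lemma zpow_succ k x : zpow r ri (Z.succ k) x = r (zpow r ri k x).
Proof.
  unfold zpow. destruct (Z.leb_spec 0 k).
  - rewrite (proj2 (Z.leb_le 0 (Z.succ k))) by lia.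
    rewrite Z2Nat.inj_succ by lia. reflexivity.
  - destruct (Z.eq_dec k (-1)) as [->|].
    + simpl. destruct (Hri x); auto.
    + rewrite (proj2 (Z.leb_gt 0 (Z.succ k))) by lia.
      replace (Z.to_nat (-k)) with (S (Z.to_nat (- Z.succ k))) by lia.
      simpl. destruct (Hri (Nat.iter (Z.to_nat (- Z.succ k)) ri x)); auto.
Qed.

Lemma zpow_pred k x : zpow r ri (Z.pred k) x = ri (zpow r ri k x).
Proof.
  replace k with (Z.succ (Z.pred k)) at 2 by lia. rewrite zpow_succ.
  destruct (Hri (zpow r ri (Z.pred k) x)); auto.
Qed.

Lemma zpow_add a b x : zpow r ri (a + b) x = zpow r ri a (zpow r ri b x).
Proof.
  revert x. induction a as [|a IH|a IH] using Z.peano_ind; intro x; [reflexivity| |].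
  - replace (Z.succ a + b)%Z with (Z.succ (a + b)) by lia. rewrite !zpow_succ, IH; auto.
  - replace (Z.pred a + b)%Z with (Z.pred (a + b)) by lia. rewrite !zpow_pred, IH; auto.
Qed.

Lemma zpow_opp k : inverse_of (zpow r ri k) (zpow r ri (- k)).
Proof.
  intro x. rewrite <- !zpow_add. replace (k + - k)%Z with 0%Z by lia.
  replace (- k + k)%Z with 0%Z by lia. split; reflexivity.
Qed.

Lemma zpow_ind (P : (R -> R) -> Prop) k : P (fun x => x) ->
  (forall g, P g -> P (fun x => r (g x))) -> (forall g, P g -> P (fun x => ri (g x))) ->
  P (zpow r ri k).
Proof.
  intros H0 Hr Hl. unfold zpow.
  destruct (0 <=? k)%Z; [induction (Z.to_nat k) as [|n IH]|induction (Z.to_nat (- k)) as [|n IH]];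
    [exact H0|exact (Hr _ IH)|exact H0|exact (Hl _ IH)].
Qed.

Lemma zpow_strict_increasing k : strict_increasing r -> strict_increasing (zpow r ri k).
Proof.
  intros H. pose proof (strict_increasing_inverse r ri H Hri).
  apply zpow_ind; unfold strict_increasing; auto.
Qed.

Lemma zpow_moves k y : moves r y -> moves r (zpow r ri k y).
Proof.
  revert y. apply (zpow_ind (fun g => forall y, moves r y -> moves r (g y))); auto.
  - intros g Hg y Hy. apply (moves_image r ri); auto.
  - intros g Hg y Hy. apply (moves_preimage r ri); auto.
Qed.

Lemma zpow_le_exponent x j j' : (forall y, y <= r y) -> (j <= j')%Z ->
  zpow r ri j x <= zpow r ri j' x.
Proof.
  intros Hp Hj. replace j' with (j + Z.of_nat (Z.to_nat (j' - j)))%Z by lia.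
  induction (Z.to_nat (j' - j)) as [|n IH].
  - replace (j + Z.of_nat 0)%Z with j by lia. lra.
  - replace (j + Z.of_nat (S n))%Z with (Z.succ (j + Z.of_nat n)) by lia.
    rewrite zpow_succ. pose proof (Hp (zpow r ri (j + Z.of_nat n) x)). lra.
Qed.

Lemma zpow_commute g : (forall x, r (g x) = g (r x)) -> forall k x, zpow r ri k (g x) = g (zpow r ri k x).
Proof.
  intros Hc k. apply (zpow_ind (fun h => forall x, h (g x) = g (h x))); auto.
  - intros h Hh x. rewrite Hh, Hc. reflexivity.
  - intros h Hh x. rewrite Hh. destruct (Hri (g (ri (h x)))) as [_ <-].
    rewrite Hc. destruct (Hri (h x)) as [-> _]. reflexivity.
Qed.

End IntegerPowers.

Lemma disjoint_moves_commute f g fi gi : inverse_of f fi -> inverse_of g gi ->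
  disjoint_moves f g -> forall x, f (g x) = g (f x).
Proof.
  intros Hf Hg Hd x.
  assert (Hfix : forall h y, ~ moves h y -> h y = y) by (intros h y H; apply NNPP, H).
  destruct (classic (moves f x)) as [Hx|Hx].
  - pose proof (moves_image _ _ _ Hf Hx) as Hfx.
    rewrite (Hfix g x), (Hfix g (f x)); auto.
    + intro; apply (Hd (f x)); auto.
    + intro; apply (Hd x); auto.
  - rewrite (Hfix f x Hx).
    destruct (classic (moves g x)) as [Hy|Hy].
    + pose proof (moves_image _ _ _ Hg Hy) as Hgx.
      apply Hfix. intro; apply (Hd (g x)); auto.
    + rewrite (Hfix g x Hy), (Hfix f x Hx). reflexivity.
Qed.

Definition conj_pair (g gi : R -> R) (q : pair) : pair :=
  (fun x => g (fst q (gi x)), fun y => snd q (gi y)).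

Lemma conj_pair_moves g gi q x : inverse_of g gi ->
  (moves (fst (conj_pair g gi q)) x <-> moves (fst q) (gi x)).
Proof.
  intros Hi. unfold conj_pair, moves; simpl. split; intros H E; apply H.
  - rewrite E. destruct (Hi x); auto.
  - rewrite <- E at 2. destruct (Hi (fst q (gi x))); auto.
Qed.

Lemma conj_pair_elementary g gi q : strict_increasing g -> inverse_of g gi ->
  elementary q -> elementary (conj_pair g gi q).
Proof.
  intros Hg Hi [Hinc [fi Hfi] Hpos Hcv [x0 [Hx0 HI]]].
  pose proof (strict_increasing_inverse g gi Hg Hi) as Hgi.
  split; simpl.
  - intros x y Hxy. apply Hg, Hinc, Hgi, Hxy.
  - exists (fun x => g (fi (gi x))).
    apply (inverse_of_comp g gi (fun x => fst q (gi x)) (fun x => g (fi x))); auto.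
    apply inverse_of_comp; auto. apply inverse_of_sym; auto.
  - intro x. pose proof (strict_increasing_le g _ _ Hg (Hpos (gi x))). destruct (Hi x). lra.
  - intros a b c Ha Hb Hc. apply conj_pair_moves; auto.
    apply conj_pair_moves in Ha, Hb; auto.
    apply (Hcv (gi a) (gi b)); auto. split; apply strict_increasing_le; tauto.
  - exists (g x0). destruct (Hi x0) as [_ E]. split.
    + apply conj_pair_moves; auto. rewrite E; auto.
    + intro y. rewrite E, HI.
      rewrite <- (strict_increasing_le_iff g x0 (gi y) Hg), <- (strict_increasing_le_iff g (gi y) (fst q x0) Hg).
      destruct (Hi y) as [E2 _]. rewrite E2. tauto.
Qed.

(* Normality and commutation modulo [gen B] only need to be checked on the generators [A]. *)
Section Normalizer.
Variables A B : (R -> R) -> Prop.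
Hypothesis A_invertible : forall a, A a -> exists ai, inverse_of a ai.
Hypothesis B_invertible : forall b, B b -> exists bi, inverse_of b bi.

Definition normalizes (g gi : R -> R) : Prop :=
  forall n, gen B n -> gen B (fun x => g (n (gi x))).

Lemma normalizes_comp f fi g gi : normalizes f fi -> normalizes g gi ->
  normalizes (fun x => f (g x)) (fun x => gi (fi x)).
Proof. intros Hf Hg n Hn. exact (Hf _ (Hg n Hn)). Qed.

Lemma normalizes_of_generators g gi : inverse_of g gi ->
  (forall b, B b -> gen B (fun x => g (b (gi x)))) -> normalizes g gi.
Proof.
  intros Hgi HB n Hn. induction Hn as [|b Hb|f h _ IHf _ IHh|f fi _ IHf Hfi].
  - apply (gen_ext _ (fun x => x)); [apply gen_id|]. intro x. destruct (Hgi x); auto.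
  - auto.
  - apply (gen_ext _ _ _ (gen_comp _ _ _ IHf IHh)). intro x. destruct (Hgi (h (gi x))) as [_ ->]. auto.
  - apply (gen_inv _ _ _ IHf). intro x. destruct (Hfi (gi x)), (Hgi (fi (gi x))), (Hgi (f (gi x))), (Hgi x).
    split; congruence.
Qed.

Hypothesis A_normalizes : forall a ai, A a -> inverse_of a ai -> normalizes a ai /\ normalizes ai a.

Lemma gen_normalizes g gi : gen A g -> inverse_of g gi -> normalizes g gi /\ normalizes gi g.
Proof.
  intros Hg. revert gi. induction Hg as [|a Ha|f g Hf IHf Hg IHg|f g Hf IHf Hfg]; intros gi Hgi.
  - assert (gi = fun x => x) as ->.
    { apply (inverse_of_unique (fun x => x)); auto. intro; auto. }
    split; intros n Hn; apply (gen_ext _ n); auto.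
  - auto.
  - destruct (gen_invertible _ f A_invertible Hf) as [fi Hfi].
    destruct (gen_invertible _ g A_invertible Hg) as [gi' Hgi'].
    assert (gi = fun x => gi' (fi x)) as ->.
    { apply (inverse_of_unique (fun x => f (g x))); auto. apply inverse_of_comp; auto. }
    destruct (IHf fi Hfi), (IHg gi' Hgi'). split; apply normalizes_comp; auto.
  - assert (gi = f) as ->.
    { apply (inverse_of_unique g); auto. apply inverse_of_sym; auto. }
    destruct (IHf g Hfg). auto.
Qed.

Definition commute_mod (f g : R -> R) : Prop :=
  exists n, gen B n /\ forall x, f (g x) = n (g (f x)).

Lemma commute_mod_id g : commute_mod (fun x => x) g.
Proof. exists (fun x => x). split; [apply gen_id|auto]. Qed.

Lemma commute_mod_sym f g : commute_mod f g -> commute_mod g f.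
Proof.
  intros [n [Hn E]]. destruct (gen_invertible _ n B_invertible Hn) as [ni Hni].
  exists ni. split; [eapply gen_inv; eauto|].
  intro x. rewrite E. destruct (Hni (g (f x))); auto.
Qed.

Lemma commute_mod_normal f g : gen B f -> gen A g -> commute_mod f g.
Proof.
  intros Hf Hg. destruct (gen_invertible _ f B_invertible Hf) as [fi Hfi].
  destruct (gen_invertible _ g A_invertible Hg) as [gi Hgi].
  exists (fun x => f (g (fi (gi x)))). split.
  - apply (gen_comp _ f (fun x => g (fi (gi x)))); auto.
    apply (gen_normalizes g gi Hg Hgi). eapply gen_inv; eauto.
  - intro x. destruct (Hgi (f x)) as [_ ->]. destruct (Hfi x) as [_ ->]. auto.
Qed.

Lemma commute_mod_comp f1 f2 g : gen A f1 -> commute_mod f1 g -> commute_mod f2 g ->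
  commute_mod (fun x => f1 (f2 x)) g.
Proof.
  intros Hf1 [n1 [N1 E1]] [n2 [N2 E2]].
  destruct (gen_invertible _ f1 A_invertible Hf1) as [f1i Hf1i].
  exists (fun y => f1 (n2 (f1i (n1 y)))). split.
  - apply (gen_comp _ (fun y => f1 (n2 (f1i y))) n1); auto.
    apply (proj1 (gen_normalizes f1 f1i Hf1 Hf1i) n2 N2).
  - intro x. rewrite E2, <- (E1 (f2 x)). destruct (Hf1i (g (f2 x))) as [_ ->]. auto.
Qed.

Lemma commute_mod_inv f fi g : gen A f -> inverse_of f fi -> commute_mod f g -> commute_mod fi g.
Proof.
  intros Hf Hfi [n [Hn E]]. destruct (gen_invertible _ n B_invertible Hn) as [ni Hni].
  exists (fun y => fi (ni (f y))). split.
  - apply (gen_normalizes f fi Hf Hfi). eapply gen_inv; eauto.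
  - intro x. rewrite E. destruct (Hfi x) as [->]. destruct (Hni (g x)) as [_ ->]. auto.
Qed.

Hypothesis A_commute_mod : forall a b, A a -> A b -> commute_mod a b.

Lemma commute_mod_generator a g : A a -> gen A g -> commute_mod a g.
Proof.
  intros Ha Hg. induction Hg as [|b Hb|g1 g2 Hg1 IH1 Hg2 IH2|g gi Hg IH Hgi].
  - apply commute_mod_sym, commute_mod_id.
  - auto.
  - apply commute_mod_sym, commute_mod_comp; auto; apply commute_mod_sym; auto.
  - apply commute_mod_sym, (commute_mod_inv g); auto. apply commute_mod_sym; auto.
Qed.

Lemma gen_commute_mod f g : gen A f -> gen A g -> commute_mod f g.
Proof.
  intros Hf Hg. induction Hf as [|a Ha|f1 f2 Hf1 IH1 Hf2 IH2|f fi Hf IH Hfi].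
  - apply commute_mod_id.
  - apply commute_mod_generator; auto.
  - apply commute_mod_comp; auto.
  - apply (commute_mod_inv f); auto.
Qed.

(* The commutator [ai (bi (a (b x)))] equals [ai (bi (n (b (a x))))], a conjugate of [n]. *)
Lemma derived1_incl f : derived (gen A) 1 f -> gen B f.
Proof.
  apply gen_incl. intros h [a [b [ai [bi [Ha [Hb [Hai [Hbi ->]]]]]]]].
  destruct (gen_commute_mod a b Ha Hb) as [n [Hn E]].
  assert (Hba : gen A (fun x => b (a x))) by (apply gen_comp; auto).
  pose proof (inverse_of_comp b bi a ai Hbi Hai) as Hinv.
  apply (gen_ext _ _ _ (proj2 (gen_normalizes _ _ Hba Hinv) n Hn)).
  intro x. rewrite E. auto.
Qed.

End Normalizer.

(** * The conjugate system of a ranked system *)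

Section Derivation.
Variable T : pair -> Prop.
Variable rho : pair -> nat.
Variable d : nat.
Hypothesis T_elementary : forall p, T p -> elementary p.
Hypothesis T_system : forall p q, T p -> T q -> p <> q ->
  disjoint_moves (fst p) (fst q) \/ nested p q \/ nested q p.
Hypothesis rho_nested : forall p q, T p -> T q -> p <> q -> nested p q -> (rho p < rho q)%nat.
Hypothesis rho_bound : forall p, T p -> (rho p < S d)%nat.

Definition maximal (p : pair) : Prop := T p /\ forall q, T q -> q <> p -> ~ nested p q.

Lemma nested_in_maximal p : T p -> ~ maximal p -> exists r, maximal r /\ nested p r.
Proof.
  induction p as [p IH] using (well_founded_induction (Wf_nat.well_founded_ltof _ (fun p => (S d - rho p)%nat))).
  intros Hp Hnm.
  assert (exists q, T q /\ q <> p /\ nested p q) as [q [Hq [Hqp Hpq]]].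
  { apply NNPP; intro H. apply Hnm. split; auto. intros q Hq Hne Hpq. apply H; eauto. }
  pose proof (rho_nested p q Hp Hq (not_eq_sym Hqp) Hpq). pose proof (rho_bound q Hq).
  destruct (classic (maximal q)) as [|Hq']; [exists q; auto|].
  destruct (IH q) as [r [Hr Hqr]]; auto; [unfold Wf_nat.ltof; lia|].
  exists r; split; auto. apply (nested_trans p q r); auto.
Qed.

Lemma maximal_disjoint r1 r2 : maximal r1 -> maximal r2 -> r1 <> r2 ->
  disjoint_moves (fst r1) (fst r2).
Proof.
  intros [H1 R1] [H2 R2] Hne.
  destruct (T_system r1 r2 H1 H2 Hne) as [|[Hn|Hn]]; auto; exfalso; [apply (R1 r2)|apply (R2 r1)]; auto.
Qed.

(* [mkConjugate r ri k q] stands for [r^k q r^-k], [ri] being the inverse of [r]. *)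
Record conjugate := mkConjugate {
  cj_root : pair; cj_root_inv : R -> R; cj_exp : Z; cj_base : pair }.

Definition admissible (w : conjugate) : Prop :=
  maximal (cj_root w) /\ inverse_of (fst (cj_root w)) (cj_root_inv w) /\
  T (cj_base w) /\ nested (cj_base w) (cj_root w).

Definition cj_power (w : conjugate) (k : Z) : R -> R :=
  zpow (fst (cj_root w)) (cj_root_inv w) k.

Definition cj_pair (w : conjugate) : pair :=
  conj_pair (cj_power w (cj_exp w)) (cj_power w (- cj_exp w)) (cj_base w).

Definition T' (p : pair) : Prop := exists w, admissible w /\ p = cj_pair w.

Lemma cj_pair_elementary w : admissible w -> elementary (cj_pair w).
Proof.
  intros [[Hr _] [Hi [Hq _]]]. apply conj_pair_elementary; auto.
  - apply zpow_strict_increasing; auto. apply T_elementary; auto.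
  - apply zpow_opp; auto.
Qed.

Lemma cj_pair_moves w x : admissible w ->
  (moves (fst (cj_pair w)) x <-> moves (fst (cj_base w)) (cj_power w (- cj_exp w) x)).
Proof. intros [_ [Hi _]]. apply conj_pair_moves, zpow_opp; auto. Qed.

Lemma cj_pair_moves_root w x : admissible w -> moves (fst (cj_pair w)) x -> moves (fst (cj_root w)) x.
Proof.
  intros Hw Hx. apply cj_pair_moves in Hx; auto. pose proof Hw as [[Hr _] [Hi [Hq Hn]]].
  apply Hn, elementary_domain_moves in Hx; auto.
  apply (zpow_moves _ (cj_root_inv w) Hi (cj_exp w)) in Hx.
  unfold cj_power in Hx. rewrite <- (zpow_add _ _ Hi), Z.add_opp_diag_r in Hx. exact Hx.
Qed.

Lemma cj_pair_moves_between w x x0 : admissible w ->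
  (forall y, snd (cj_root w) y <-> x0 <= y <= fst (cj_root w) x0) ->
  moves (fst (cj_pair w)) x ->
  cj_power w (cj_exp w) x0 < x < cj_power w (cj_exp w + 1) x0.
Proof.
  intros Hw HI Hx. apply cj_pair_moves in Hx; auto. pose proof Hw as [[Hr _] [Hi [Hq Hn]]].
  pose proof (nested_moves_inside _ _ _ _ (T_elementary _ Hq) HI Hn Hx) as [Hl Hu].
  pose proof (zpow_strict_increasing _ _ Hi (cj_exp w) (elementary_increasing _ (T_elementary _ Hr))) as Hinc.
  apply Hinc in Hl; apply Hinc in Hu.
  destruct (zpow_opp _ _ Hi (cj_exp w) x) as [E _]. unfold cj_power in *. rewrite E in Hl, Hu.
  rewrite (zpow_add _ _ Hi). split; assumption.
Qed.

Lemma cj_pair_disjoint_or_same_power w1 w2 : admissible w1 -> admissible w2 ->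
  disjoint_moves (fst (cj_pair w1)) (fst (cj_pair w2)) \/
  (cj_root w1 = cj_root w2 /\ cj_root_inv w1 = cj_root_inv w2 /\ cj_exp w1 = cj_exp w2).
Proof.
  intros H1 H2. destruct (classic (cj_root w1 = cj_root w2)) as [E|Ne].
  - assert (Ei : cj_root_inv w1 = cj_root_inv w2).
    { destruct H1 as [_ [Hi1 _]], H2 as [_ [Hi2 _]]. rewrite E in Hi1.
      apply (inverse_of_unique _ _ _ Hi1 Hi2). }
    destruct (Z.eq_dec (cj_exp w1) (cj_exp w2)) as [Ek|Nk]; [right; auto|left].
    pose proof (T_elementary _ (proj1 (proj1 H1))) as [_ _ Hpos _ [x0 [_ HI]]].
    assert (HI2 : forall y, snd (cj_root w2) y <-> x0 <= y <= fst (cj_root w2) x0) by (rewrite <- E; auto).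
    intros x [Hx1 Hx2].
    pose proof (cj_pair_moves_between w1 x x0 H1 HI Hx1) as [A1 B1].
    pose proof (cj_pair_moves_between w2 x x0 H2 HI2 Hx2) as [A2 B2].
    unfold cj_power in *. rewrite <- E, <- Ei in A2, B2.
    pose proof (proj1 (proj2 H1)) as Hi.
    destruct (Z_lt_le_dec (cj_exp w1) (cj_exp w2)).
    + pose proof (zpow_le_exponent _ _ Hi x0 (cj_exp w1 + 1) (cj_exp w2) Hpos ltac:(lia)). lra.
    + pose proof (zpow_le_exponent _ _ Hi x0 (cj_exp w2 + 1) (cj_exp w1) Hpos ltac:(lia)). lra.
  - left. intros x [Hx1 Hx2].
    apply (maximal_disjoint _ _ (proj1 H1) (proj1 H2) Ne x).
    split; apply cj_pair_moves_root; auto.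
Qed.

Lemma T'_elementary p : T' p -> elementary p.
Proof. intros [w [Hw ->]]. apply cj_pair_elementary; auto. Qed.

Lemma T'_system p q : T' p -> T' q -> p <> q ->
  disjoint_moves (fst p) (fst q) \/ nested p q \/ nested q p.
Proof.
  intros [w1 [H1 ->]] [w2 [H2 ->]] Hne.
  destruct (cj_pair_disjoint_or_same_power w1 w2 H1 H2) as [|[Er [Ei Ek]]]; [left; auto|].
  destruct w1 as [r ri k q1], w2 as [r2 ri2 k2 q2]; simpl in *. subst r2 ri2 k2.
  destruct (classic (q1 = q2)) as [->|Nq]; [tauto|].
  destruct H1 as [_ [Hi [Hq1 _]]], H2 as [_ [_ [Hq2 _]]]. unfold cj_pair, cj_power in *; simpl in *.
  pose proof (zpow_opp _ _ Hi k) as Hk.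
  destruct (T_system q1 q2 Hq1 Hq2 Nq) as [Hd|[Hn|Hn]]; [left|right; left|right; right].
  - intros x [A B]. apply (Hd (zpow (fst r) ri (- k) x)).
    split; [apply (conj_pair_moves _ _ q1 x Hk)|apply (conj_pair_moves _ _ q2 x Hk)]; auto.
  - intros x A. apply Hn. apply (conj_pair_moves _ _ q1 x Hk); auto.
  - intros x A. apply Hn. apply (conj_pair_moves _ _ q2 x Hk); auto.
Qed.

Definition rho' (p : pair) : nat :=
  match excluded_middle_informative (T' p) with
  | left H => rho (cj_base (proj1_sig (constructive_indefinite_description _ H)))
  | right _ => 0%nat
  end.

Lemma rho'_spec p : T' p -> exists w, admissible w /\ p = cj_pair w /\ rho' p = rho (cj_base w).
Proof.
  intro H. unfold rho'. destruct (excluded_middle_informative (T' p)) as [t|]; [|contradiction].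
  destruct (constructive_indefinite_description _ t) as [w [Hw E]]; simpl. exists w; auto.
Qed.

Lemma rho'_nested p q : T' p -> T' q -> p <> q -> nested p q -> (rho' p < rho' q)%nat.
Proof.
  intros Hp Hq Hne Hn.
  destruct (rho'_spec p Hp) as [w1 [H1 [-> ->]]], (rho'_spec q Hq) as [w2 [H2 [-> ->]]].
  destruct (cj_pair_disjoint_or_same_power w1 w2 H1 H2) as [Hd|[Er [Ei Ek]]].
  { exfalso. apply (disjoint_not_nested (cj_pair w1) (cj_pair w2)); auto; apply cj_pair_elementary; auto. }
  destruct w1 as [r ri k q1], w2 as [r2 ri2 k2 q2]; simpl in *. subst r2 ri2 k2.
  destruct (classic (q1 = q2)) as [->|Nq]; [tauto|].
  destruct H1 as [_ [Hi [Hq1 _]]], H2 as [_ [_ [Hq2 _]]]. simpl in *.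
  apply rho_nested; auto. intros y Hy.
  pose proof (Hn (zpow (fst r) ri k y)) as Hny. unfold cj_pair, cj_power, conj_pair in Hny; simpl in Hny.
  destruct (zpow_opp _ _ Hi (- k) y) as [E _]. rewrite Z.opp_involutive in E. rewrite E in Hny.
  apply Hny, (conj_pair_moves _ _ q1 _ (zpow_opp _ _ Hi k)). simpl. rewrite E. auto.
Qed.

Lemma rho'_bound p : T' p -> (rho' p < d)%nat.
Proof.
  intros Hp. destruct (rho'_spec p Hp) as [w [[[Hr _] [_ [Hq Hn]]] [_ ->]]].
  assert (cj_base w <> cj_root w) by (intros E; rewrite E in Hn; apply (nested_irrefl (cj_root w)); auto).
  pose proof (rho_nested _ _ Hq Hr H Hn). pose proof (rho_bound _ Hr). lia.
Qed.

Let generators_T (f : R -> R) : Prop := exists I, T (f, I).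
Let generators_T' (f : R -> R) : Prop := exists I, T' (f, I).

Lemma generators_T_invertible f : generators_T f -> exists fi, inverse_of f fi.
Proof. intros [I HT]. apply (elementary_invertible (f, I)), T_elementary, HT. Qed.

Lemma generators_T'_invertible f : generators_T' f -> exists fi, inverse_of f fi.
Proof. intros [I HT]. apply (elementary_invertible (f, I)), T'_elementary, HT. Qed.

Lemma cj_pair_in_gen w : admissible w -> gen generators_T' (fst (cj_pair w)).
Proof. intros Hw. apply gen_base. exists (snd (cj_pair w)). exists w. destruct (cj_pair w); auto. Qed.

Lemma not_maximal_in_gen f I : T (f, I) -> ~ maximal (f, I) -> gen generators_T' f.
Proof.
  intros HT Hnm. destruct (nested_in_maximal _ HT Hnm) as [r [Hr Hn]].
  destruct (T_elementary r (proj1 Hr)) as [_ [ri Hri] _ _ _].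
  apply (gen_ext _ (fst (cj_pair (mkConjugate r ri 0 (f, I))))); [|reflexivity].
  apply cj_pair_in_gen. split; [|split; [|split]]; auto.
Qed.

(* Conjugating [r^k q r^-k] by [r^e] gives [r^(e+k) q r^-(e+k)] if [r] is its
   root, and changes nothing otherwise since the supports are disjoint. *)
Lemma maximal_power_conj r ri e w : maximal r -> inverse_of (fst r) ri -> admissible w ->
  gen generators_T' (fun x => zpow (fst r) ri e (fst (cj_pair w) (zpow (fst r) ri (- e) x))).
Proof.
  intros Hr Hri Hw.
  destruct (classic (cj_root w = r)) as [Er|Nr].
  - pose proof Hw as [Hr' [Hi' [Hq Hn]]].
    assert (Ei : cj_root_inv w = ri) by (rewrite Er in Hi'; apply (inverse_of_unique _ _ _ Hi' Hri)).
    destruct w as [r0 ri0 k q]; simpl in *; subst r0 ri0.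
    apply (gen_ext _ (fst (cj_pair (mkConjugate r ri (e + k) q)))).
    + apply cj_pair_in_gen. split; [|split; [|split]]; auto.
    + intro x. unfold cj_pair, cj_power, conj_pair; simpl.
      rewrite !(zpow_add _ _ Hri). f_equal. f_equal.
      replace (- (e + k))%Z with (- k + - e)%Z by lia. rewrite (zpow_add _ _ Hri). reflexivity.
  - assert (Hd : disjoint_moves (fst r) (fst (cj_pair w))).
    { intros x [A B]. apply (maximal_disjoint r (cj_root w) Hr (proj1 Hw) (not_eq_sym Nr) x).
      split; auto. apply cj_pair_moves_root; auto. }
    destruct (cj_pair_elementary w Hw) as [_ [ci Hci] _ _ _].
    pose proof (zpow_commute _ _ Hri _ (disjoint_moves_commute _ _ _ _ Hri Hci Hd) e) as Hc.
    apply (gen_ext _ (fst (cj_pair w))); [apply cj_pair_in_gen; auto|].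
    intro x. rewrite Hc. destruct (zpow_opp _ _ Hri e x) as [-> _]. reflexivity.
Qed.

Lemma generators_T_normalize a ai : generators_T a -> inverse_of a ai ->
  normalizes generators_T' a ai /\ normalizes generators_T' ai a.
Proof.
  intros [I HT] Hai. destruct (classic (maximal (a, I))) as [Hm|Hnm].
  - split; apply normalizes_of_generators; [auto| |apply inverse_of_sym; auto|];
      intros b [J [w [Hw E]]]; replace b with (fst (cj_pair w)) by (rewrite <- E; auto).
    + apply (gen_ext _ _ _ (maximal_power_conj (a, I) ai 1 w Hm Hai Hw)). reflexivity.
    + apply (gen_ext _ _ _ (maximal_power_conj (a, I) ai (-1) w Hm Hai Hw)). reflexivity.
  - pose proof (not_maximal_in_gen a I HT Hnm) as Ha.
    assert (Hai' : gen generators_T' ai) by (eapply gen_inv; eauto).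
    split; intros n Hn; apply gen_comp; auto; apply (gen_comp _ n); auto.
Qed.

Lemma generators_T_commute_mod a b : generators_T a -> generators_T b ->
  commute_mod generators_T' a b.
Proof.
  intros Ha Hb.
  assert (Hmod : forall f g, generators_T f -> ~ (exists I, maximal (f, I)) -> generators_T g ->
    commute_mod generators_T' f g).
  { intros f g [I HT] Hnm Hg. apply commute_mod_normal with (A := generators_T);
      auto using generators_T_invertible, generators_T'_invertible, generators_T_normalize, gen_base.
    apply (not_maximal_in_gen f I HT). intro; apply Hnm; eauto. }
  destruct (classic (exists I, maximal (a, I))) as [[I Hma]|]; [|apply Hmod; auto].
  destruct (classic (exists J, maximal (b, J))) as [[J Hmb]|];
    [|apply commute_mod_sym; auto using generators_T'_invertible].
  exists (fun x => x). split; [apply gen_id|].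
  destruct (classic ((a, I) = (b, J))) as [E|Ne]; [injection E as -> ->; reflexivity|].
  destruct (T_elementary _ (proj1 Hma)) as [_ [ai Hai] _ _ _].
  destruct (T_elementary _ (proj1 Hmb)) as [_ [bi Hbi] _ _ _].
  apply (disjoint_moves_commute a b ai bi); auto. apply (maximal_disjoint (a, I) (b, J)); auto.
Qed.

Lemma derived1_in_conjugates f : derived (gen generators_T) 1 f -> gen generators_T' f.
Proof.
  apply derived1_incl; auto using generators_T_invertible, generators_T'_invertible,
    generators_T_normalize, generators_T_commute_mod.
Qed.

End Derivation.

Theorem ranked_system_derived_trivial d : forall (T : pair -> Prop) (rho : pair -> nat),
  (forall p, T p -> elementary p) ->
  (forall p q, T p -> T q -> p <> q -> disjoint_moves (fst p) (fst q) \/ nested p q \/ nested q p) ->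
  (forall p q, T p -> T q -> p <> q -> nested p q -> (rho p < rho q)%nat) ->
  (forall p, T p -> (rho p < d)%nat) ->
  trivial_group (derived (gen (fun f => exists I, T (f, I))) d).
Proof.
  induction d as [|d IH]; intros T rho Hel Hsys Hrho Hbound h Hh.
  - apply (gen_trivial (fun f => exists I, T (f, I)) h); auto.
    intros f [I HT]. pose proof (Hbound _ HT). lia.
  - rewrite derived_succ in Hh.
    apply (derived_mono _ _ d (derived1_in_conjugates T rho d Hel Hsys Hrho Hbound)) in Hh.
    apply (IH (T' T) (rho' T rho)) in Hh; auto.
    + apply T'_elementary; auto.
    + apply T'_system; auto.
    + apply rho'_nested; auto.
    + apply (rho'_bound T rho d); auto.
Qed.

(** * Ranking a finite fundamental system *)

Lemma filter_length_lt {A : Type} (P : A -> bool) (l l' : list A) y : NoDup l ->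
  P y = false -> In y l' -> (forall x, In x l -> P x = true -> In x l') ->
  (length (filter P l) < length l')%nat.
Proof.
  intros Hl Hy Hy' Hincl.
  apply (NoDup_incl_length (l := y :: filter P l)).
  - constructor; [rewrite filter_In; intros [_ E]; congruence|apply NoDup_filter; auto].
  - intros x [<-|Hx]; auto. apply filter_In in Hx as [? ?]; auto.
Qed.

Definition decide (P : Prop) : bool := if excluded_middle_informative P then true else false.

Lemma decide_true P : decide P = true <-> P.
Proof. unfold decide; destruct excluded_middle_informative; split; auto; discriminate. Qed.

Section FundamentalSystem.
Variable S : list pair.
Hypothesis HS : fundamental_system S.

Lemma fundamental_system_elementary p : In p S -> elementary p.
Proof.
  destruct HS as [_ [Hel _]]. intros Hp. destruct p as [f I].
  destruct (Hel _ Hp) as [? [? [? ?]]]. apply elementary_of_fundamental; auto.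
Qed.

Lemma fundamental_system_nested p q : In p S -> In q S -> p <> q ->
  disjoint_moves (fst p) (fst q) \/ nested p q \/ nested q p.
Proof.
  destruct HS as [_ [Hel Hpair]]. intros Hp Hq Hne.
  assert (Hh : forall p, In p S -> homeo01 (fst p)) by (intros r Hr; apply Hel; auto).
  destruct (Hpair p q Hp Hq Hne) as [Hd|[Hn|Hn]]; [left|right; left|right; right].
  - intros x [Xp Xq]. apply (Hd x).
    split; apply moves_interior_support; auto using fundamental_system_elementary.
  - intros x Hx. apply Hn, moves_support; auto.
  - intros x Hx. apply Hn, moves_support; auto.
Qed.

Definition nested_count (p : pair) : nat := length (filter (fun q => decide (nested q p)) S).

Lemma nested_count_self p : In p S -> decide (nested p p) = false.
Proof.
  intros Hp. destruct (decide (nested p p)) eqn:E; auto.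
  apply decide_true, nested_irrefl in E; [contradiction|apply fundamental_system_elementary; auto].
Qed.

Lemma nested_count_lt p q : In p S -> In q S -> nested p q -> (nested_count p < nested_count q)%nat.
Proof.
  intros Hp Hq Hn. apply (filter_length_lt _ _ _ p); [apply HS|apply nested_count_self; auto| |].
  - apply filter_In. split; auto. apply decide_true; auto.
  - intros x Hx Hxp. apply filter_In. split; auto. rewrite decide_true in *.
    apply (nested_trans x p q); auto using fundamental_system_elementary.
Qed.

Lemma nested_count_bound p : In p S -> (nested_count p < length S)%nat.
Proof. intros Hp. apply (filter_length_lt _ _ _ p); auto using nested_count_self; apply HS. Qed.

End FundamentalSystem.

Theorem propositionp (S : list ((R -> R) * (R -> Prop))) :
  fundamental_system S ->
  solvable (elementary_group S) /\
  derived_length_le (elementary_group S) (length S).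
Proof.
  intros HS.
  assert (H : derived_length_le (elementary_group S) (length S)).
  { apply (ranked_system_derived_trivial _ (fun p => In p S) (nested_count S)).
    - apply fundamental_system_elementary; auto.
    - apply fundamental_system_nested; auto.
    - intros p q Hp Hq _. apply nested_count_lt; auto.
    - apply nested_count_bound; auto. }
  split; [exists (length S)|]; exact H.
Qed.
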